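(* Let $G=(V,E)$ be an arbitrary graph with capacities $b_v\ge0$, demands $d_{u,e},d_{v,e}\ge0$ and profits $p_e\ge0$ for each edge $e=uv$, such that the instance has a consistent ordering of edges and $d_{v,e}\le b_v$ for all $v$ and $e\in\delta(v)$. Let $M'\subseteq E$ satisfy $\sum_{e\in\delta_{M'}(v)\setminus L(v)}d_{v,e}\le b_v$ for every $v\in V$, where $L(v)$ is a set of the two edges of $\delta_{M'}(v)$ with highest $d_{v,e}$ (or $L(v)=\delta_{M'}(v)$ if $|\delta_{M'}(v)|\le1$). Then one can find $M\subseteq M'$ with $\sum_{e\in\delta_M(v)}d_{v,e}\le b_v$ for all $v\in V$ and $p(M)\ge\frac{p(M')}{5}$.
   Context: A consistent ordering of edges is a linear order of $E$ whose restriction to each $\delta(v)$ lists the edges in nondecreasing order of $d_{v,e}$. $\delta(v)$ is the set of edges incident to $v$, $\delta_{M'}(v)=\delta(v)\cap M'$, $p(M)=\sum_{e\in M}p_e$. *)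

From HB Require Import structures.
From mathcomp Require Import all_boot all_order all_algebra.
Set Implicit Arguments. Unset Strict Implicit. Unset Printing Implicit Defensive.
Import Order.TTheory GRing.Theory Num.Theory.
Local Open Scope ring_scope.

(* A graph with vertex set V and edge set E (parallel edges allowed, no
   loops): every edge e has two distinct endpoints [src e] and [dst e]. *)

Definition delta (V E : finType) (src dst : E -> V) (v : V) : {set E} :=
  [set e | (src e == v) || (dst e == v)].

Definition deltaM (V E : finType) (src dst : E -> V) (M : {set E}) (v : V)
  : {set E} := delta src dst v :&: M.

Definition consistent_ordering (R : realDomainType) (V E : finType)
  (src dst : E -> V) (d : V -> E -> R) (rk : E -> nat) : Prop :=
  injective rk /\
  forall v e f, e \in delta src dst v -> f \in delta src dst v ->
    (rk e < rk f)%N -> d v e <= d v f.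

(* L is a valid choice of L(v) for the edge set S = delta_{M'}(v):
   if |S| <= 1 then L = S, otherwise L consists of two edges of S with
   highest demand d v _. *)
Definition top2 (R : realDomainType) (E : finType) (w : E -> R)
  (S L : {set E}) : Prop :=
  L \subset S /\ #|L| = minn 2 #|S| /\
  forall e f, e \in L -> f \in S :\: L -> w f <= w e.

Definition profit (R : realDomainType) (E : finType) (p : E -> R)
  (M : {set E}) : R := \sum_(e in M) p e.

(* Let T(v) be the at most two edges of highest rank in delta_{M'}(v).  As the
   ordering is consistent with d_v, dropping T(v) removes at least as much
   demand as dropping any set of at most |T(v)| edges, in particular L(v); so
   delta_{M'}(v) minus T(v) fits into b_v.  Call two edges conflicting if they
   share an endpoint v at which one of them lies in T(v).  A conflict-free set
   of edges is feasible: at every v it is a single edge or it avoids T(v).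
   The conflicting edges of higher rank than e lie in T(src e) and T(dst e),
   so there are at most 4 of them, and colouring greedily from the highest rank
   down splits M' into 5 conflict-free classes, one of which carries at least
   p(M')/5. *)

From HB Require Import structures.
From mathcomp Require Import all_boot all_order all_algebra.
From mathcomp Require Import zify.
Set Implicit Arguments. Unset Strict Implicit. Unset Printing Implicit Defensive.
Import Order.TTheory GRing.Theory Num.Theory.
Local Open Scope ring_scope.

Lemma ler_sum_dominated (R : realDomainType) (E : finType) (w : E -> R)
    (A C : {set E}) :
  (#|A| <= #|C|)%N -> {in A & C, forall a c, w a <= w c} ->
  {in C, forall c, 0 <= w c} ->
  \sum_(e in A) w e <= \sum_(e in C) w e.
Proof.
elim: {A}#|A| {-2}A (erefl #|A|) C => [|n IH] A cardA C leAC wAC w_ge0.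
  by move/eqP: cardA; rewrite cards_eq0 => /eqP->; rewrite big_set0 sumr_ge0.
have /set0Pn[a aA] : A != set0 by rewrite -card_gt0 cardA.
have /set0Pn[c cC] : C != set0 by rewrite -card_gt0 (leq_trans _ leAC) ?cardA.
rewrite (big_setD1 _ aA) (big_setD1 _ cC) lerD ?wAC //.
apply: IH.
- by move: cardA; rewrite (cardsD1 a) aA => -[].
- by move: leAC; rewrite (cardsD1 a A) (cardsD1 c C) aA cC.
- by move=> x y /setD1P[_ xA] /setD1P[_ yC]; apply: wAC.
- by move=> y /setD1P[_ yC]; apply: w_ge0.
Qed.

Lemma exists_ge_mean (R : realFieldType) (n : nat) (F : 'I_n.+1 -> R) :
  exists i, (\sum_j F j) / n.+1%:R <= F i.
Proof.
have [i _ Fmax] := @arg_maxP _ _ _ ord0 xpredT F erefl.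
exists i; rewrite ler_pdivrMr ?ltr0Sn //.
suff: \sum_j F j <= \sum_(j < n.+1) F i by rewrite sumr_const card_ord mulr_natr.
by apply: ler_sum => j _; apply: Fmax.
Qed.

Lemma greedy_coloring (E : finType) (rk : E -> nat) (cf : rel E) (k : nat)
    (X : {set E}) :
  injective rk -> symmetric cf ->
  {in X, forall e, #|[set f in X | cf e f && (rk e < rk f)%N]| <= k}%N ->
  exists c : E -> 'I_k.+1,
    {in X &, forall e f, e != f -> cf e f -> c e != c f}.
Proof.
move=> rkI cfC.
elim: {X}#|X| {-2}X (erefl #|X|) => [|n IH] X cardX above_le.
  by exists (fun=> ord0) => e f eX; move: cardX; rewrite (cardsD1 e) eX.
have /set0Pn[e0 e0X] : X != set0 by rewrite -card_gt0 cardX.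
have [e /= eX rk_min] := @arg_minnP _ e0 (fun x => x \in X) rk e0X.
have [c' c'P] : exists c' : E -> 'I_k.+1,
    {in X :\ e &, forall x y, x != y -> cf x y -> c' x != c' y}.
  apply: IH => [|x /setD1P[_ xX]].
    by move: cardX; rewrite (cardsD1 e) eX => -[].
  apply: leq_trans (above_le x xX); apply/subset_leq_card/subsetP => f.
  by rewrite !inE => /andP[/andP[_ ->] ->].
set above := [set f in X | cf e f && (rk e < rk f)%N].
have /set0Pn[col colN] : ~: (c' @: above) != set0.
  rewrite -card_gt0; have := cardsC (c' @: above).
  have := leq_imset_card c' above; have := above_le e eX.
  by rewrite -/above card_ord; lia.
rewrite in_setC in colN.
have col_fresh y : y \in X -> y != e -> cf e y -> c' y != col.
  move=> yX ye cf_ey; apply: contraNneq colN => <-.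
  apply/imsetP; exists y => //; rewrite inE yX cf_ey ltn_neqAle rk_min //.
  by rewrite andbT; apply: contra ye => /eqP/rkI ->.
exists (fun x => if x == e then col else c' x) => x y xX yX xy cf_xy.
have [xe|xe] := eqVneq x e; have [ye|ye] := eqVneq y e.
- by move: xy; rewrite xe ye eqxx.
- by rewrite eq_sym col_fresh // -xe.
- by rewrite col_fresh // cfC -ye.
- by apply: c'P => //; apply/setD1P.
Qed.

Definition top_rank (E : finType) (rk : E -> nat) (D : {set E}) : {set E} :=
  [set e in D | #|[set f in D | rk e < rk f]| <= 1]%N.

Section TopRank.

Variables (E : finType) (rk : E -> nat) (D : {set E}).
Local Notation T := (top_rank rk D).

Lemma top_rank_sub : T \subset D.
Proof. by apply/subsetP => e; rewrite inE => /andP[]. Qed.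

Lemma top_rank_up c f : c \in T -> f \in D -> (rk c <= rk f)%N -> f \in T.
Proof.
rewrite !inE => /andP[_ above_c] fD le_cf; rewrite fD (leq_trans _ above_c) //.
apply/subset_leq_card/subsetP => g.
by rewrite !inE => /andP[-> /(leq_ltn_trans le_cf)->].
Qed.

Lemma top_rank_ltn a c : a \in D :\: T -> c \in T -> (rk a < rk c)%N.
Proof.
case/setDP=> aD aT cT; rewrite ltnNge; apply: contra aT.
exact: top_rank_up.
Qed.

Lemma card_top_rank_ge : (minn 2 #|D| <= #|T|)%N.
Proof.
have [DT | /subsetPn[a0 a0D a0T]] := boolP (D \subset T).
  by rewrite geq_min subset_leq_card ?orbT.
have a0DT : a0 \in D :\: T by apply/setDP.
have [a /= /setDP[aD aT] rk_max] := @arg_maxnP _ a0 (fun x => x \in D :\: T) rk a0DT.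
have above_a : (1 < #|[set f in D | rk a < rk f]|)%N.
  by move: aT; rewrite inE aD ltnNge.
have above_sub : [set f in D | (rk a < rk f)%N] \subset T.
  apply/subsetP => f; rewrite inE => /andP[fD lt_af].
  by apply: contraTT lt_af => fT; rewrite -leqNgt rk_max //; apply/setDP.
by rewrite geq_min (leq_trans above_a (subset_leq_card above_sub)).
Qed.

Lemma card_top_rank_le : injective rk -> (#|T| <= 2)%N.
Proof.
move=> rkI; rewrite leqNgt; apply/negP => T_gt2.
have /set0Pn[e0 e0T] : T != set0 by rewrite -card_gt0 (ltn_trans _ T_gt2).
have [a /= aT rk_min] := @arg_minnP _ e0 (fun x => x \in T) rk e0T.
have card_T_a : (#|T :\ a| <= #|[set f in D | rk a < rk f]|)%N.
  apply/subset_leq_card/subsetP => f /setD1P[fa fT].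
  rewrite inE (subsetP top_rank_sub) //= ltn_neqAle rk_min // andbT.
  by apply: contra fa => /eqP/rkI ->.
move: T_gt2; rewrite (cardsD1 a) aT => T_gt2.
by move: aT; rewrite inE => /andP[_ above_a]; lia.
Qed.

Lemma sum_out_top_rank (R : realDomainType) (w : E -> R) (L : {set E}) :
  {in D &, forall e f, (rk e < rk f)%N -> w e <= w f} ->
  {in D, forall e, 0 <= w e} ->
  L \subset D -> (#|L| <= #|T|)%N ->
  \sum_(e in D :\: T) w e <= \sum_(e in D :\: L) w e.
Proof.
move=> w_mono w_ge0 LD card_LT.
rewrite (big_setID L) [X in _ <= X](big_setID T) /= !setDDl [T :|: L]setUC.
rewrite lerD // setIC setIDA (setIidPl LD) setIC setIDA (setIidPl top_rank_sub).
apply: ler_sum_dominated.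
- by rewrite !cardsD setIC leq_sub2r.
- move=> a c aLT /setDP[cT _]; have /setDP[aL aT] := aLT.
  have aD := subsetP LD a aL.
  apply: w_mono (subsetP top_rank_sub c cT) _ => //.
  by apply: top_rank_ltn cT; apply/setDP.
- by move=> c /setDP[/(subsetP top_rank_sub) cD _]; apply: w_ge0.
Qed.

End TopRank.

Lemma sum_le_singleton_or_avoid (R : realDomainType) (E : finType)
    (w : E -> R) (B : R) (A D T : {set E}) :
  A \subset D -> {in A &, forall e f, e \in T -> e = f} ->
  {in D, forall e, 0 <= w e <= B} ->
  \sum_(e in D :\: T) w e <= B -> \sum_(e in A) w e <= B.
Proof.
move=> AD single w_bnd sum_out.
have [/setP AT0 | [e /setIP[eA eT]]] := set_0Vmem (A :&: T).
  have AT : A \subset D :\: T.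
    apply/subsetP => e eA; rewrite inE (subsetP AD) // andbT.
    by have := AT0 e; rewrite !inE eA /= => ->.
  apply: le_trans sum_out; rewrite [X in _ <= X](big_setID A) (setIidPr AT) /=.
  by rewrite lerDl; apply: sumr_ge0 => e /setDP[/setDP[/w_bnd/andP[]]].
have -> : A = [set e].
  apply/setP => f; rewrite inE; apply/idP/eqP => [fA | ->] //.
  by rewrite (single e f).
by rewrite big_set1; case/andP: (w_bnd e (subsetP AD e eA)).
Qed.

Section Conflicts.

Variables (V E : finType) (src dst : E -> V) (rk : E -> nat) (M : {set E}).
Local Notation top v := (top_rank rk (deltaM src dst M v)).

Definition conflict : rel E := fun e f =>
  [exists v, [&& e \in delta src dst v, f \in delta src dst v &
                 (e \in top v) || (f \in top v)]].

Lemma conflict_sym : symmetric conflict.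
Proof.
by move=> e f; apply/existsP/existsP => -[v /and3P[eV fV top_ef]];
  exists v; rewrite eV fV orbC.
Qed.

Lemma card_conflict_above e : injective rk ->
  (#|[set f in M | conflict e f && (rk e < rk f)]| <= 4)%N.
Proof.
move=> rkI; apply: leq_trans (_ : #|top (src e) :|: top (dst e)| <= 4)%N.
  apply/subset_leq_card/subsetP => f.
  rewrite inE => /and3P[fM /existsP[v /and3P[eV fV top_ef]] lt_ef].
  have fT : f \in top v.
    have fD : f \in deltaM src dst M v by apply/setIP.
    by case/orP: top_ef => // eT; apply: top_rank_up eT fD (ltnW lt_ef).
  move: eV fT; rewrite [_ \in delta _ _ _]inE.
  by case/orP => /eqP-> fT; rewrite in_setU fT ?orbT.
apply: leq_trans (leq_card_setU _ _).1 _.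
exact: leq_add (card_top_rank_le _ rkI) (card_top_rank_le _ rkI).
Qed.

Lemma conflict_free_feasible (R : realDomainType) (b : V -> R)
    (d : V -> E -> R) (S : {set E}) v :
  S \subset M -> {in S &, forall e f, conflict e f -> e = f} ->
  (forall e, e \in delta src dst v -> 0 <= d v e <= b v) ->
  \sum_(e in deltaM src dst M v :\: top v) d v e <= b v ->
  \sum_(e in deltaM src dst S v) d v e <= b v.
Proof.
move=> SM free d_bnd; apply: sum_le_singleton_or_avoid.
- exact: setIS.
- move=> e f /setIP[eV eS] /setIP[fV fS] eT; apply: free => //.
  by apply/existsP; exists v; rewrite eV fV eT.
- by move=> e /setIP[eV _]; apply: d_bnd.
Qed.

End Conflicts.

Theorem lemma7 (R : realFieldType) (V E : finType) (src dst : E -> V)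
  (b : V -> R) (d : V -> E -> R) (p : E -> R) (M' : {set E}) :
  (forall e, src e != dst e) ->
  (forall v, 0 <= b v) ->
  (forall v e, e \in delta src dst v -> 0 <= d v e) ->
  (forall e, 0 <= p e) ->
  (exists rk : E -> nat, consistent_ordering src dst d rk) ->
  (forall v e, e \in delta src dst v -> d v e <= b v) ->
  (forall v, exists L : {set E},
      top2 (d v) (deltaM src dst M' v) L /\
      \sum_(e in deltaM src dst M' v :\: L) d v e <= b v) ->
  exists M : {set E}, M \subset M' /\
    (forall v, \sum_(e in deltaM src dst M v) d v e <= b v) /\
    profit p M' / 5%:R <= profit p M.
Proof.
move=> _ _ d_ge0 _ [rk [rkI rk_mono]] d_le_b hL.
pose top v := top_rank rk (deltaM src dst M' v).
have sum_out_top v : \sum_(e in deltaM src dst M' v :\: top v) d v e <= b v.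
  have [L [[LD [cardL _]] sum_out_L]] := hL v.
  apply: le_trans sum_out_L; apply: sum_out_top_rank LD _.
  - by move=> e f /setIP[eV _] /setIP[fV _]; apply: rk_mono.
  - by move=> e /setIP[eV _]; apply: d_ge0.
  - by rewrite cardL card_top_rank_ge.
have [c c_ok] := greedy_coloring rkI (conflict_sym src dst rk M')
  (fun e _ => card_conflict_above src dst M' e rkI).
pose cls i := [set e in M' | c e == i].
have cls_sub i : cls i \subset M' by apply/subsetP => e /setIdP[].
have profit_cls : profit p M' = \sum_(i < 5) profit p (cls i).
  rewrite /profit (partition_big c xpredT) //; apply: eq_bigr => i _.
  by apply: eq_bigl => e; rewrite inE.
have [i profit_i] := exists_ge_mean (fun i => profit p (cls i)).
exists (cls i); split; [exact: cls_sub | split; last by rewrite profit_cls].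
move=> v; apply: conflict_free_feasible (cls_sub i) _ _ (sum_out_top v).
  move=> e f /setIdP[eM /eqP ce] /setIdP[fM /eqP cf] cef.
  apply/eqP/negP => /negP ef.
  by move: (c_ok e f eM fM ef cef); rewrite ce cf eqxx.
by move=> e eV; rewrite d_ge0 ?d_le_b.
Qed.
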